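(* Let $\mathcal{F}=\{N_r:r\in\mathbb{N}\}$ be a countable almost disjoint family of infinite subsets of $\mathbb{N}$ and let $(\lambda_{i,j})_{i,j\in\mathbb{N}}$ be a real matrix such that: (i) $\lim_{i\to\infty}\lambda_{i,j}=0$ for every $j\in\mathbb{N}$; (ii) $\sum_{j\in\mathbb{N}}|\lambda_{i,j}|<\infty$ for every $i\in\mathbb{N}$; (iii) $\lim_{i\to\infty}\sum_{j\in\mathbb{N}}\lambda_{i,j}=1$. If $\lim_{i\to\infty}\sum_{j\in N_1\cup\dots\cup N_r}\lambda_{i,j}=0$ for every $r\in\mathbb{N}$, then there exists an infinite set $N'\subset\mathbb{N}$ such that $\mathcal{F}\cup\{N'\}$ is almost disjoint and $\limsup_{i\to\infty}\sum_{j\in N'}\lambda_{i,j}\ge\frac12$.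
   Context: An almost disjoint family is an infinite family of pairwise almost disjoint infinite subsets of $\mathbb{N}$, where two sets are almost disjoint if their intersection is finite. *)

From Stdlib Require Import Reals ClassicalEpsilon.
From Coquelicot Require Import Coquelicot.
Open Scope R_scope.

Definition infinite_set (A : nat -> Prop) : Prop :=
  forall n : nat, exists m : nat, (n <= m)%nat /\ A m.

Definition almost_disjoint (A B : nat -> Prop) : Prop :=
  exists n : nat, forall m : nat, (n <= m)%nat -> ~ (A m /\ B m).

Definition almost_disjoint_family (N : nat -> nat -> Prop) : Prop :=
  (forall r, infinite_set (N r)) /\
  (forall r s, r <> s -> almost_disjoint (N r) (N s)).

Definition add_member (N' : nat -> Prop) (N : nat -> nat -> Prop) : nat -> nat -> Prop :=
  fun r => match r with O => N' | S r' => N r' end.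

Definition restrict (A : nat -> Prop) (f : nat -> R) (j : nat) : R :=
  if excluded_middle_informative (A j) then f j else 0.

Definition sum_over (lam : nat -> nat -> R) (i : nat) (A : nat -> Prop) : R :=
  Series (restrict A (lam i)).

Definition union_upto (N : nat -> nat -> Prop) (r : nat) : nat -> Prop :=
  fun j => exists k, (k <= r)%nat /\ N k j.

(** A gliding-hump construction.  Put [C k] for the complement of
    [N_0 ∪ ... ∪ N_k]; by (iii) and the hypothesis on the unions,
    [sum_{j ∈ C k} λ_{i,j} → 1] as [i → ∞].  Recursively pick rows [i_k ≥ k]
    and cut points [b_0 < b_1 < ...] such that [sum_{j ∈ C k} λ_{i_k,j} > 3/4]
    while the mass [sum |λ_{i_k,j}|] outside the block [(b_k, b_{k+1}]] is
    below [1/4]: the head [j ≤ b_k] is small for large [i] by (i), the tail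
    [j > b_{k+1}] is small for large [b_{k+1}] by (ii).  Then
    [N' = ⋃_k ((b_k, b_{k+1}] ∩ C k)] agrees with [C k] on the [k]-th block, so
    [sum_{j ∈ N'} λ_{i_k,j} ≥ 1/2] for every [k]; for the same reason the
    [k]-th block meets [C k], so [N'] is infinite; and since the [C k]
    decrease, beyond [b_s] the set [N'] lies in [C s], which misses [N_s]. *)

From Stdlib Require Import Reals Lra Lia ClassicalEpsilon.
From Coquelicot Require Import Coquelicot.
Open Scope R_scope.

Lemma ex_series_restrict (A : nat -> Prop) (f : nat -> R) :
  ex_series (fun j => Rabs (f j)) -> ex_series (restrict A f).
Proof.
  intros Hf. apply (ex_series_le (restrict A f) (fun j => Rabs (f j))); [|exact Hf].
  intros j. change (Rabs (restrict A f j) <= Rabs (f j)).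
  unfold restrict. destruct excluded_middle_informative.
  - apply Rle_refl.
  - rewrite Rabs_R0. apply Rabs_pos.
Qed.

Lemma Series_restrict_le (a : nat -> R) (n : nat) :
  Series (restrict (fun j => (j <= n)%nat) a) = sum_n a n.
Proof.
  apply is_series_unique.
  change (is_lim_seq (sum_n (restrict (fun j => (j <= n)%nat) a)) (sum_n a n)).
  apply is_lim_seq_ext_loc with (fun _ => sum_n a n); [|apply is_lim_seq_const].
  exists n. intros m. induction m as [|m IHm]; intros Hm.
  - replace n with 0%nat by lia. apply sum_n_ext_loc. intros j Hj.
    unfold restrict. destruct excluded_middle_informative; [easy | lia].
  - destruct (Nat.eq_dec n (S m)) as [->|Hne].
    + apply sum_n_ext_loc. intros j Hj.
      unfold restrict. destruct excluded_middle_informative; [easy | lia].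
    + rewrite sum_Sn, <- IHm by lia. unfold restrict.
      destruct excluded_middle_informative; [lia|]. symmetry. apply Rplus_0_r.
Qed.

Lemma Series_restrict_compl (f : nat -> R) (A : nat -> Prop) :
  ex_series (fun j => Rabs (f j)) ->
  Series f = Series (restrict A f) + Series (restrict (fun j => ~ A j) f).
Proof.
  intros Hf. rewrite <- Series_plus by (apply ex_series_restrict; exact Hf).
  apply Series_ext. intros j. unfold restrict.
  do 2 destruct excluded_middle_informative; tauto || lra.
Qed.

Lemma Rabs_restrict_sub_le (A B : nat -> Prop) (f : nat -> R) (j : nat) :
  Rabs (restrict A f j - restrict B f j) <= Rabs (f j).
Proof.
  pose proof (Rabs_pos (f j)).
  unfold restrict. do 2 destruct excluded_middle_informative;
    rewrite ?Rminus_diag, ?Rminus_0_r, ?Rminus_0_l, ?Rabs_Ropp, ?Rabs_R0; lra.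
Qed.

Lemma restrict_sub_eq0 (A B : nat -> Prop) (f : nat -> R) (j : nat) :
  (A j <-> B j) -> restrict A f j - restrict B f j = 0.
Proof.
  intros HAB. unfold restrict.
  do 2 destruct excluded_middle_informative; tauto || ring.
Qed.

Lemma restrict_window_bound (f : nat -> R) (A B : nat -> Prop) (b b' : nat) :
  ex_series (fun j => Rabs (f j)) -> (b <= b')%nat ->
  (forall j, (b < j <= b')%nat -> (A j <-> B j)) ->
  Rabs (Series (restrict A f) - Series (restrict B f)) <=
  sum_n (fun j => Rabs (f j)) b +
    (Series (fun j => Rabs (f j)) - sum_n (fun j => Rabs (f j)) b').
Proof.
  intros Hf Hbb' HAB.
  set (af := fun j => Rabs (f j)).
  set (head n := restrict (fun j => (j <= n)%nat) af).
  set (g j := af j - head b' j + head b j).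
  assert (Ehead : forall n, ex_series (head n)).
  { intros n. apply ex_series_restrict. apply (ex_series_ext af); [|exact Hf].
    intros j. unfold af. now rewrite Rabs_Rabsolu. }
  assert (Eg' : ex_series (fun j => af j - head b' j))
    by (apply (ex_series_minus af (head b')); easy).
  assert (Eg : ex_series g)
    by (apply (ex_series_plus (fun j => af j - head b' j) (head b)); easy).
  assert (Sg : Series g = sum_n af b + (Series af - sum_n af b')).
  { unfold g. rewrite (Series_plus (fun j => af j - head b' j) (head b)) by easy.
    rewrite (Series_minus af (head b')) by easy.
    unfold head. rewrite !Series_restrict_le. ring. }
  set (d j := restrict A f j - restrict B f j).
  assert (Hdg : forall j, Rabs (d j) <= g j).
  { intros j. pose proof (Rabs_restrict_sub_le A B f j) as Hle.
    pose proof (restrict_sub_eq0 A B f j) as Heq.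
    fold (d j) in Hle, Heq. unfold g, head, af, restrict.
    do 2 destruct excluded_middle_informative; try lia; try lra.
    rewrite Heq by (apply HAB; lia). rewrite Rabs_R0. lra. }
  assert (Ed : ex_series (fun j => Rabs (d j))).
  { apply (ex_series_le (fun j => Rabs (d j)) g); [|exact Eg].
    intros j. rewrite Rabs_Rabsolu. apply Hdg. }
  rewrite <- Series_minus by (apply ex_series_restrict; exact Hf).
  rewrite <- Sg. eapply Rle_trans; [apply (Series_Rabs d Ed)|].
  apply Series_le; [|exact Eg].
  intros j. split; [apply Rabs_pos | apply Hdg].
Qed.

Lemma is_lim_seq_sum_n_abs_null (u : nat -> nat -> R) (b : nat) :
  (forall j, is_lim_seq (fun i => u i j) 0) ->
  is_lim_seq (fun i => sum_n (fun j => Rabs (u i j)) b) 0.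
Proof.
  intros Hu.
  assert (Habs : forall j, is_lim_seq (fun i => Rabs (u i j)) 0).
  { intros j. pose proof (is_lim_seq_abs _ _ (Hu j)) as H.
    simpl in H. now rewrite Rabs_R0 in H. }
  induction b as [|b IHb].
  - apply (is_lim_seq_ext (fun i => Rabs (u i 0%nat))); [|apply Habs].
    intros i. now rewrite sum_O.
  - apply (is_lim_seq_ext
      (fun i => sum_n (fun j => Rabs (u i j)) b + Rabs (u i (S b)))).
    { intros i. now rewrite sum_Sn. }
    replace (Finite 0) with (Finite (0 + 0)) by (f_equal; ring).
    now apply is_lim_seq_plus'.
Qed.

Lemma is_lim_seq_eventually_near (u : nat -> R) (l eps : R) :
  0 < eps -> is_lim_seq u l ->
  exists n0, forall n, (n0 <= n)%nat -> l - eps < u n < l + eps.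
Proof.
  intros Heps Hu. apply is_lim_seq_spec in Hu.
  destruct (Hu (mkposreal eps Heps)) as [n0 Hn0]. exists n0.
  intros n Hn. specialize (Hn0 n Hn). simpl in Hn0.
  apply Rabs_def2 in Hn0. lra.
Qed.

Lemma LimSup_seq_ge_frequently (u : nat -> R) (c : R) :
  (forall k, exists i, (k <= i)%nat /\ c <= u i) ->
  Rbar_le c (LimSup_seq u).
Proof.
  intros Hfreq. unfold LimSup_seq.
  destruct (ex_LimSup_seq u) as [[l| |] Hl]; simpl in *.
  - destruct (Rle_lt_dec c l) as [Hle|Hlt]; [exact Hle|].
    destruct (Hl (mkposreal (c - l) ltac:(lra))) as [_ [k Hk]]. simpl in Hk.
    destruct (Hfreq k) as [i [Hki Hi]]. specialize (Hk i Hki). lra.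
  - exact I.
  - destruct (Hl c) as [k Hk]. destruct (Hfreq k) as [i [Hki Hi]].
    specialize (Hk i Hki). lra.
Qed.

Lemma almost_disjoint_sym (A B : nat -> Prop) :
  almost_disjoint A B -> almost_disjoint B A.
Proof.
  intros [n Hn]. exists n. intros m Hm [HB HA]. exact (Hn m Hm (conj HA HB)).
Qed.

Lemma almost_disjoint_family_add_member (N : nat -> nat -> Prop) (N' : nat -> Prop) :
  almost_disjoint_family N -> infinite_set N' ->
  (forall s, almost_disjoint N' (N s)) ->
  almost_disjoint_family (add_member N' N).
Proof.
  intros [Hinf Had] Hinf' Had'. split.
  - intros [|r]; simpl; auto.
  - intros [|r] [|s] Hrs; simpl.
    + easy.
    + apply Had'.
    + apply almost_disjoint_sym, Had'.
    + apply Had. lia.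
Qed.

Section GlidingHump.

Variable lam : nat -> nat -> R.
Hypothesis Hi : forall j, is_lim_seq (fun i => lam i j) 0.
Hypothesis Hii : forall i, ex_series (fun j => Rabs (lam i j)).
Variable C : nat -> nat -> Prop.
Hypothesis HC : forall k, is_lim_seq (fun i => sum_over lam i (C k)) 1.

Let mass i := fun j => Rabs (lam i j).

Definition hump_ok (k b : nat) (p : nat * nat) : Prop :=
  (k <= fst p)%nat /\ (b < snd p)%nat /\
  3/4 < sum_over lam (fst p) (C k) /\
  sum_n (mass (fst p)) b + (Series (mass (fst p)) - sum_n (mass (fst p)) (snd p))
    < 1/4.

Lemma hump_step (k b : nat) : exists p, hump_ok k b p.
Proof.
  destruct (is_lim_seq_eventually_near _ _ (1/4) ltac:(lra) (HC k)) as [i0 Hi0].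
  destruct (is_lim_seq_eventually_near _ _ (1/8) ltac:(lra)
              (is_lim_seq_sum_n_abs_null lam b Hi)) as [i1 Hi1].
  set (i := (k + i0 + i1)%nat).
  assert (Htail : is_lim_seq (fun n => sum_n (mass i) n) (Series (mass i)))
    by exact (Series_correct _ (Hii i)).
  destruct (is_lim_seq_eventually_near _ _ (1/8) ltac:(lra) Htail) as [b0 Hb0].
  exists (i, S (b + b0)). unfold hump_ok; simpl.
  specialize (Hi0 i ltac:(unfold i; lia)). specialize (Hi1 i ltac:(unfold i; lia)).
  specialize (Hb0 (S (b + b0)) ltac:(lia)).
  unfold mass in *. repeat split; [unfold i; lia | lia | lra | lra].
Qed.

Definition hump (k b : nat) : nat * nat :=
  proj1_sig (constructive_indefinite_description _ (hump_step k b)).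

Lemma hump_spec (k b : nat) : hump_ok k b (hump k b).
Proof. exact (proj2_sig (constructive_indefinite_description _ (hump_step k b))). Qed.

Fixpoint cut (k : nat) : nat :=
  match k with O => O | S k' => snd (hump k' (cut k')) end.

Definition row (k : nat) : nat := fst (hump k (cut k)).

Definition hump_set (j : nat) : Prop :=
  exists k, (cut k < j <= cut (S k))%nat /\ C k j.

Lemma cut_lt_succ (k : nat) : (cut k < cut (S k))%nat.
Proof. apply (hump_spec k (cut k)). Qed.

Lemma cut_le (k l : nat) : (k <= l)%nat -> (cut k <= cut l)%nat.
Proof. induction 1 as [|l _ IH]; [lia|]. pose proof (cut_lt_succ l). lia. Qed.

Lemma cut_ge (k : nat) : (k <= cut k)%nat.
Proof. induction k as [|k IH]; [lia|]. pose proof (cut_lt_succ k). lia. Qed.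

Lemma hump_set_block (k j : nat) :
  (cut k < j <= cut (S k))%nat -> (hump_set j <-> C k j).
Proof.
  intros Hj. split.
  - intros [k' [Hj' HC']].
    replace k with k'; [exact HC'|].
    destruct (Nat.lt_trichotomy k k') as [Hlt|[Heq|Hlt]].
    + pose proof (cut_le (S k) k' Hlt). lia.
    + easy.
    + pose proof (cut_le (S k') k Hlt). lia.
  - intros HCk. now exists k.
Qed.

Lemma hump_set_row (k : nat) : 1/2 <= sum_over lam (row k) hump_set.
Proof.
  destruct (hump_spec k (cut k)) as [_ [Hcut [Hbig Hsmall]]]. fold (row k) in *.
  pose proof (restrict_window_bound (lam (row k)) hump_set (C k)
                (cut k) (cut (S k)) (Hii _) ltac:(simpl; lia) (hump_set_block k))
    as Hwin.
  unfold sum_over, mass in *. simpl in Hwin. apply Rabs_le_between' in Hwin. lra.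
Qed.

Lemma C_meets_block (k : nat) : exists j, (cut k < j <= cut (S k))%nat /\ C k j.
Proof.
  destruct (classic (exists j, (cut k < j <= cut (S k))%nat /\ C k j)) as [H|Hnone];
    [exact H|exfalso].
  destruct (hump_spec k (cut k)) as [_ [Hcut [Hbig Hsmall]]]. fold (row k) in *.
  assert (Hagree : forall j, (cut k < j <= cut (S k))%nat -> (False <-> C k j)).
  { intros j Hj. split; [easy|]. intros HCk. apply Hnone. now exists j. }
  pose proof (restrict_window_bound (lam (row k)) (fun _ => False) (C k)
                (cut k) (cut (S k)) (Hii _) ltac:(simpl; lia) Hagree) as Hwin.
  assert (Hzero : Series (restrict (fun _ => False) (lam (row k))) = 0).
  { rewrite (Series_ext _ (fun j => 0 * lam (row k) j)), Series_scal_l; [ring|].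
    intros j. unfold restrict. destruct excluded_middle_informative; [easy | ring]. }
  unfold sum_over, mass in *. simpl in Hwin. rewrite Hzero in Hwin.
  apply Rabs_le_between' in Hwin. lra.
Qed.

Lemma hump_set_infinite : infinite_set hump_set.
Proof.
  intros n. destruct (C_meets_block n) as [j [Hj HCj]].
  exists j. pose proof (cut_ge n). split; [lia|]. now exists n.
Qed.

Lemma hump_set_tail (s j : nat) :
  (cut s < j)%nat -> hump_set j -> exists k, (s <= k)%nat /\ C k j.
Proof.
  intros Hsj [k [Hj HCk]]. exists k. split; [|exact HCk].
  destruct (Nat.le_gt_cases s k) as [Hle|Hgt]; [exact Hle|].
  pose proof (cut_le (S k) s Hgt). lia.
Qed.

Lemma hump_set_LimSup : Rbar_le (1/2) (LimSup_seq (fun i => sum_over lam i hump_set)).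
Proof.
  apply LimSup_seq_ge_frequently. intros k. exists (row k). split.
  - apply (hump_spec k (cut k)).
  - apply hump_set_row.
Qed.

End GlidingHump.

Lemma is_lim_seq_sum_over_compl (lam : nat -> nat -> R) (A : nat -> Prop) :
  (forall i, ex_series (fun j => Rabs (lam i j))) ->
  is_lim_seq (fun i => Series (lam i)) 1 ->
  is_lim_seq (fun i => sum_over lam i A) 0 ->
  is_lim_seq (fun i => sum_over lam i (fun j => ~ A j)) 1.
Proof.
  intros Hii Hiii HA.
  apply (is_lim_seq_ext (fun i => Series (lam i) - sum_over lam i A)).
  { intros i. unfold sum_over. rewrite (Series_restrict_compl (lam i) A (Hii i)). ring. }
  replace (Finite 1) with (Finite (1 - 0)) by (f_equal; ring).
  now apply is_lim_seq_minus'.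
Qed.

Theorem lemma4p11 (N : nat -> nat -> Prop) (lam : nat -> nat -> R)
  (HF : almost_disjoint_family N)
  (Hi : forall j : nat, is_lim_seq (fun i => lam i j) 0)
  (Hii : forall i : nat, ex_series (fun j => Rabs (lam i j)))
  (Hiii : is_lim_seq (fun i => Series (lam i)) 1)
  (Hr : forall r : nat, is_lim_seq (fun i => sum_over lam i (union_upto N r)) 0) :
  exists N' : nat -> Prop,
    infinite_set N' /\
    almost_disjoint_family (add_member N' N) /\
    Rbar_le (Finite (1 / 2)) (LimSup_seq (fun i => sum_over lam i N')).
Proof.
  set (C k j := ~ union_upto N k j).
  assert (HC : forall k, is_lim_seq (fun i => sum_over lam i (C k)) 1).
  { intros k. apply is_lim_seq_sum_over_compl; auto. }
  set (N' := hump_set lam Hi Hii C HC).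
  assert (Hinf : infinite_set N') by apply hump_set_infinite.
  assert (Had : forall s, almost_disjoint N' (N s)).
  { intros s. exists (S (cut lam Hi Hii C HC s)). intros j Hj [HN' HNs].
    destruct (hump_set_tail lam Hi Hii C HC s j ltac:(lia) HN') as [k [Hsk HCk]].
    apply HCk. now exists s. }
  exists N'. split; [exact Hinf|]. split.
  - now apply almost_disjoint_family_add_member.
  - apply hump_set_LimSup.
Qed.
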